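(* Let $k\ge2$ and $t\ge1$ be integers. Let $K$ be the number of inner blocks of $0$s of length at least two in the binary expansion of $t$, and $L$ the number of maximal blocks of $1$s of length $\le k$ in the binary expansion of $t$. Then \[m(t)\ge 4+K+\max\Bigl(0,\Bigl\lfloor\frac{L-2K-1}{2}\Bigr\rfloor\Bigr)\frac{k}{2^k}.\] In particular, for all integers $D_0\ge2$ and $k\ge2$ there exists a bound $B=B(D_0,k)$ such that for all integers $t\ge1$ with $D(t)\le D_0$, the number of inner blocks of $0$s of length $\ge2$ in $t$ and the number of maximal blocks of $1$s of length $\le k$ in $t$ are both bounded by $B$.
   Context: $s(n)$ is the number of $1$s in the binary expansion of $n\ge0$; $\delta(j,t)=\lim_{N\to\infty}\frac1N|\{0\le n<N: s(n+t)-s(n)=j\}|$ for $j\in\mathbb Z$, a probability distribution on $\mathbb Z$, and $\kappa_j(t)$ denotes its $j$-th cumulant ($\log\sum_k\delta(k,t)e^{2\pi ik\vartheta}=\sum_{j\ge0}\frac{\kappa_j(t)}{j!}(2\pi i\vartheta)^j$ near $\vartheta=0$). Set $D(t)=\kappa_2(t)-\kappa_3(t)/3$ and $m(t)=\min(D(t),D(t+1))$. A maximal block of $1$s is a maximal run of consecutive binary digits equal to $1$; its length is the number of digits. An inner block of $0$s is a maximal run of consecutive binary digits equal to $0$ that is bordered by a digit $1$ on both sides (so trailing zeros at the least significant end are not inner blocks). *)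

From Stdlib Require Import Reals ZArith Arith List Lia Bool.
From Coquelicot Require Import Coquelicot.
Import ListNotations.
Open Scope R_scope.

(* s(n): number of 1s in the binary expansion of n
   (bits beyond position n are always 0 since n < 2^(n+1)). *)
Definition s (n : nat) : nat :=
  length (filter (Nat.testbit n) (seq 0 (S n))).

Definition cnt (j : Z) (t N : nat) : nat :=
  length (filter (fun n => Z.eqb (Z.of_nat (s (n + t)) - Z.of_nat (s n)) j)
                 (seq 0 N)).

Definition delta (j : Z) (t : nat) : R :=
  Lim_seq (fun N => INR (cnt j t N) / INR N).

Definition moment (m t : nat) : R :=
  Series (fun k => delta (Z.of_nat k) t * (INR k) ^ m)
  + Series (fun k => delta (- Z.of_nat (S k)) t * (- INR (S k)) ^ m).

(* Cumulants via the standard moment-cumulant recursion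
   kappa_n = M_n - sum_{m=1}^{n-1} C(n-1,m-1) kappa_m M_{n-m}  (n >= 1),
   kappa_0 = log M_0 = 0, which is the coefficient identity of
   log (sum_k delta(k,t) e^{k z}) = sum_j kappa_j z^j / j!. *)
Fixpoint kappa_aux (fuel : nat) (n t : nat) : R :=
  match fuel with
  | O => 0
  | S f =>
    match n with
    | O => 0
    | S n' =>
      moment n t -
      fold_right Rplus 0
        (map (fun m => INR (Nat.div (fact n') (fact (m - 1) * fact (n' - (m - 1))))
                        * kappa_aux f m t * moment (n - m) t)
             (seq 1 n'))
    end
  end.

Definition kappa (j t : nat) : R := kappa_aux (S j) j t.

Definition D (t : nat) : R := kappa 2 t - kappa 3 t / 3.
Definition mD (t : nat) : R := Rmin (D t) (D (t + 1)).

(* binary digits of t, least significant first (no leading zeros for t >= 1) *)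
Definition bits (t : nat) : list bool :=
  map (Nat.testbit t) (seq 0 (S (Nat.log2 t))).

Fixpoint rle (l : list bool) : list (bool * nat) :=
  match l with
  | [] => []
  | b :: l' =>
    match rle l' with
    | (c, n) :: r => if Bool.eqb b c then (c, S n) :: r else (b, 1%nat) :: (c, n) :: r
    | [] => [(b, 1%nat)]
    end
  end.

Definition runs (t : nat) : list (bool * nat) := rle (bits t).

(* K(t): number of inner blocks of 0s (bordered by 1s on both sides, i.e.
   neither the first nor the last run) of length >= 2 *)
Definition innerZeroBlocks2 (t : nat) : nat :=
  length (filter (fun p => negb (fst p) && Nat.leb 2 (snd p))
                 (removelast (tl (runs t)))).

Definition oneBlocksLe (k t : nat) : nat :=
  length (filter (fun p => fst p && Nat.leb (snd p) k) (runs t)).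

(** δ(·,t) satisfies δ(j,2u) = δ(j,u) and δ(j,2u+1) = (δ(j-1,u) + δ(j+1,u+1))/2 and has an
    exponentially thin left tail, so its moments of order at most 3 obey linear recursions along
    the binary digits of t.  As M₁ = 0, D = M₂ - M₃/3, and one finds D(2t) = D(t) and
    D(2t+1) = (D(t) + D(t+1))/2 + h(t), where h(2t) = 1 + h(t)/2, h(2t+1) = h(t)/2 and h ∈ [0,2].
    Hence appending a binary digit to t raises m(t) by an explicit nonnegative gain that depends
    only on g(t) = D(t+1) - D(t) and h(t).

    Reading t from its leading digit, an amortised argument over the runs of digits then shows
    m(t) ≥ 4 + K + w(L - 2K - 2) for every weight 0 ≤ w ≤ min_{l ≤ k} l/2^l: a block of at least
    two inner 0s and the following 1 together gain at least 1, which pays for K at rate 1 - 2w,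
    and a block of l ones between a single 0 and the next 0 gains at least l/2^l ≥ w.  The
    weights w = 0 and w = k/2^k give the two assertions. *)

From Stdlib Require Import Reals ZArith List Lia Lra Bool.
From Coquelicot Require Import Coquelicot.
Import ListNotations.
Open Scope R_scope.

(** * Binary digit sums and the counts [cnt] *)

Lemma testbit_ge (n i : nat) : (n <= i)%nat -> Nat.testbit n i = false.
Proof.
  intros Hni. destruct n as [|n]; [apply Nat.bits_0|].
  apply Nat.bits_above_log2. pose proof (Nat.log2_lt_lin (S n)). lia.
Qed.

Lemma s_filter_seq (n M : nat) : (n <= M)%nat ->
  length (filter (Nat.testbit n) (seq 0 M)) = s n.
Proof.
  assert (Hext : forall M, (n <= M)%nat ->
    length (filter (Nat.testbit n) (seq 0 M)) = length (filter (Nat.testbit n) (seq 0 n))).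
  { intros M' HM. replace M' with (n + (M' - n))%nat by lia.
    rewrite seq_app, filter_app, length_app.
    rewrite (filter_ext_in _ (fun _ => false) (seq (0 + n) _)), filter_false;
      [cbn [length]; lia|].
    intros i Hi%in_seq. apply testbit_ge. lia. }
  intros HM. unfold s. rewrite (Hext M), (Hext (S n)); lia.
Qed.

Lemma s_double_add (n : nat) (b : bool) : s (2 * n + Nat.b2n b) = (Nat.b2n b + s n)%nat.
Proof.
  set (m := (2 * n + Nat.b2n b)%nat).
  assert (Hbit0 : Nat.testbit m 0 = b).
  { destruct b;
      [apply Nat.testbit_odd_0|unfold m; rewrite Nat.add_0_r; apply Nat.testbit_even_0]. }
  assert (Hbits : forall i, Nat.testbit m (S i) = Nat.testbit n i).
  { intros i. destruct b; [apply Nat.testbit_odd_succ|];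
      [|unfold m; rewrite Nat.add_0_r; apply Nat.testbit_even_succ]; lia. }
  unfold s at 1. change (seq 0 (S m)) with (0%nat :: seq 1 m). rewrite <- seq_shift. cbn [filter].
  rewrite Hbit0, filter_map_swap, (filter_ext _ _ Hbits).
  rewrite <- (s_filter_seq n m) by (unfold m; lia).
  destruct b; cbn [length Nat.b2n]; now rewrite length_map.
Qed.

Lemma s_double (n : nat) : s (2 * n) = s n.
Proof. rewrite <- (Nat.add_0_r (2 * n)). apply (s_double_add n false). Qed.

Lemma s_succ_double (n : nat) : s (2 * n + 1) = S (s n).
Proof. apply (s_double_add n true). Qed.

Definition count_below (p : nat -> bool) (N : nat) : nat := length (filter p (seq 0 N)).

Lemma count_below_succ (p : nat -> bool) (N : nat) :
  count_below p (S N) = (count_below p N + Nat.b2n (p N))%nat.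
Proof.
  unfold count_below. rewrite seq_S, filter_app, length_app. cbn.
  destruct (p N); reflexivity.
Qed.

Lemma count_below_ext (p q : nat -> bool) (N : nat) :
  (forall n, p n = q n) -> count_below p N = count_below q N.
Proof. intros Hpq. unfold count_below. now rewrite (filter_ext p q). Qed.

Lemma count_below_le (p : nat -> bool) (N : nat) : (count_below p N <= N)%nat.
Proof. unfold count_below. rewrite <- (length_seq N 0) at 2. apply filter_length_le. Qed.

Lemma count_below_const (b : bool) (N : nat) :
  count_below (fun _ => b) N = (Nat.b2n b * N)%nat.
Proof.
  induction N as [|N IH]; [destruct b; reflexivity|].
  rewrite count_below_succ, IH. destruct b; cbn [Nat.b2n]; lia.
Qed.

Lemma count_below_double (p : nat -> bool) (M : nat) :
  count_below p (2 * M) =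
  (count_below (fun m => p (2 * m)%nat) M + count_below (fun m => p (2 * m + 1)%nat) M)%nat.
Proof.
  induction M as [|M IH]; [reflexivity|].
  replace (2 * S M)%nat with (S (S (2 * M))) by lia.
  rewrite !count_below_succ, IH, (Nat.add_1_r (2 * M)). lia.
Qed.

Lemma div_2_double_add (M r : nat) : (r < 2)%nat -> ((2 * M + r) / 2)%nat = M.
Proof. intros Hr. symmetry. apply (Nat.div_unique _ 2 M r); lia. Qed.

Lemma count_below_halves (p : nat -> bool) (N : nat) :
  count_below p N = (count_below (fun m => p (2 * m)%nat) ((N + 1) / 2)
                     + count_below (fun m => p (2 * m + 1)%nat) (N / 2))%nat.
Proof.
  destruct (Nat.Even_or_Odd N) as [[M ->]|[M ->]].
  - rewrite (div_2_double_add M 1), <- (Nat.add_0_r (2 * M)), div_2_double_add, Nat.add_0_r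
      by lia.
    apply count_below_double.
  - replace (2 * M + 1 + 1)%nat with (2 * S M + 0)%nat by lia.
    rewrite !div_2_double_add by lia.
    rewrite Nat.add_1_r, count_below_succ, count_below_double, count_below_succ. lia.
Qed.

Definition jump (t n : nat) : Z := (Z.of_nat (s (n + t)) - Z.of_nat (s n))%Z.

Lemma cnt_count_below (j : Z) (t N : nat) :
  cnt j t N = count_below (fun n => Z.eqb (jump t n) j) N.
Proof. reflexivity. Qed.

Lemma jump_double_double (u m : nat) : jump (2 * u) (2 * m) = jump u m.
Proof.
  unfold jump. replace (2 * m + 2 * u)%nat with (2 * (m + u))%nat by lia.
  now rewrite !s_double.
Qed.

Lemma jump_double_succ_double (u m : nat) : jump (2 * u) (2 * m + 1) = jump u m.
Proof.
  unfold jump. replace (2 * m + 1 + 2 * u)%nat with (2 * (m + u) + 1)%nat by lia.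
  rewrite !s_succ_double. lia.
Qed.

Lemma jump_succ_double_double (u m : nat) : jump (2 * u + 1) (2 * m) = (jump u m + 1)%Z.
Proof.
  unfold jump. replace (2 * m + (2 * u + 1))%nat with (2 * (m + u) + 1)%nat by lia.
  rewrite s_succ_double, s_double. lia.
Qed.

Lemma jump_succ_double_succ_double (u m : nat) :
  jump (2 * u + 1) (2 * m + 1) = (jump (u + 1) m - 1)%Z.
Proof.
  unfold jump. replace (2 * m + 1 + (2 * u + 1))%nat with (2 * (m + (u + 1)))%nat by lia.
  rewrite s_succ_double, s_double. lia.
Qed.

Lemma cnt_zero (j : Z) (N : nat) : cnt j 0 N = if Z.eqb j 0 then N else 0%nat.
Proof.
  rewrite cnt_count_below.
  rewrite (count_below_ext _ (fun _ => Z.eqb 0 j)), count_below_const.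
  - rewrite Z.eqb_sym. destruct (Z.eqb j 0); cbn [Nat.b2n]; lia.
  - intros n. unfold jump. now rewrite Nat.add_0_r, Z.sub_diag.
Qed.

Lemma cnt_double (j : Z) (u N : nat) :
  cnt j (2 * u) N = (cnt j u ((N + 1) / 2) + cnt j u (N / 2))%nat.
Proof.
  rewrite !cnt_count_below, count_below_halves. f_equal; apply count_below_ext; intros m.
  - now rewrite jump_double_double.
  - now rewrite jump_double_succ_double.
Qed.

Lemma cnt_succ_double (j : Z) (u N : nat) :
  cnt j (2 * u + 1) N = (cnt (j - 1) u ((N + 1) / 2) + cnt (j + 1) (u + 1) (N / 2))%nat.
Proof.
  rewrite !cnt_count_below, count_below_halves. f_equal; apply count_below_ext; intros m.
  - rewrite jump_succ_double_double.
    destruct (Z.eqb_spec (jump u m + 1) j), (Z.eqb_spec (jump u m) (j - 1)); lia.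
  - rewrite jump_succ_double_succ_double.
    destruct (Z.eqb_spec (jump (u + 1) m - 1) j), (Z.eqb_spec (jump (u + 1) m) (j + 1)); lia.
Qed.

Lemma binary_ind (P : nat -> Prop) :
  P 0%nat -> P 1%nat ->
  (forall u, (1 <= u)%nat -> P u -> P (2 * u)%nat) ->
  (forall u, (1 <= u)%nat -> P u -> P (u + 1)%nat -> P (2 * u + 1)%nat) ->
  forall t, P t.
Proof.
  intros H0 H1 Hdouble Hsucc_double t. induction t as [t IH] using lt_wf_ind.
  destruct (Nat.Even_or_Odd t) as [[[|u] ->]|[[|u] ->]]; auto.
  - apply Hdouble; [lia|]. apply IH; lia.
  - apply Hsucc_double; [lia| |]; apply IH; lia.
Qed.

(** * The limit frequencies [delta] *)

Definition freq (j : Z) (t N : nat) : R := INR (cnt j t N) / INR N.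

Definition dirac0 (j : Z) : R := if Z.eqb j 0 then 1 else 0.

Lemma freq_bounds (j : Z) (t N : nat) : 0 <= freq j t N <= 1.
Proof.
  unfold freq. destruct N as [|N].
  - cbn [INR]. unfold Rdiv. rewrite Rinv_0, Rmult_0_r. lra.
  - assert (HN : 0 < INR (S N)) by (apply lt_0_INR; lia).
    pose proof (le_INR _ _ (count_below_le (fun n => Z.eqb (jump t n) j) (S N))) as Hle.
    pose proof (pos_INR (cnt j t (S N))).
    split; [apply Rdiv_le_0_compat; lra|].
    apply (Rdiv_le_1 _ _ HN). exact Hle.
Qed.

Lemma is_lim_seq_inv_INR : is_lim_seq (fun n => / INR n) 0.
Proof. exact (is_lim_seq_inv INR p_infty is_lim_seq_INR ltac:(discriminate)). Qed.

Definition about_half (c : nat -> nat) : Prop :=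
  forall N, (N <= 2 * c N + 1 /\ 2 * c N <= N + 1)%nat.

Lemma about_half_ceil : about_half (fun N => (N + 1) / 2)%nat.
Proof.
  intros N. pose proof (Nat.div_mod (N + 1) 2 ltac:(lia)).
  pose proof (Nat.mod_upper_bound (N + 1) 2 ltac:(lia)). lia.
Qed.

Lemma about_half_floor : about_half (fun N => N / 2)%nat.
Proof.
  intros N. pose proof (Nat.div_mod N 2 ltac:(lia)).
  pose proof (Nat.mod_upper_bound N 2 ltac:(lia)). lia.
Qed.

Lemma is_lim_seq_about_half (c : nat -> nat) :
  about_half c -> is_lim_seq (fun N => INR (c N) / INR N) (1 / 2).
Proof.
  intros Hc.
  apply (is_lim_seq_le_le_loc (fun N => 1 / 2 - / INR N / 2) _ (fun N => 1 / 2 + / INR N / 2)).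
  - exists 1%nat. intros n Hn. destruct (Hc n) as [H1 H2].
    apply le_INR in H1, H2. rewrite plus_INR, mult_INR in H1, H2. cbn [INR] in H1, H2.
    assert (Hn' : 1 <= INR n) by (apply (le_INR 1); lia).
    split; apply Rmult_le_reg_r with (INR n); try lra; field_simplify; lra.
  - replace (1 / 2) with (1 / 2 - 0 / 2) at 1 by field.
    apply is_lim_seq_minus'; [apply is_lim_seq_const|].
    apply is_lim_seq_div'; [apply is_lim_seq_inv_INR|apply is_lim_seq_const|lra].
  - replace (1 / 2) with (1 / 2 + 0 / 2) at 1 by field.
    apply is_lim_seq_plus'; [apply is_lim_seq_const|].
    apply is_lim_seq_div'; [apply is_lim_seq_inv_INR|apply is_lim_seq_const|lra].
Qed.

Lemma is_lim_seq_ratio_about_half (A c : nat -> nat) (a : R) :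
  A 0%nat = 0%nat -> about_half c ->
  is_lim_seq (fun N => INR (A N) / INR N) a ->
  is_lim_seq (fun N => INR (A (c N)) / INR N) (a / 2).
Proof.
  intros HA Hc Hl.
  apply (is_lim_seq_ext (fun N => INR (A (c N)) / INR (c N) * (INR (c N) / INR N))).
  - intros N. destruct (Nat.eq_dec (c N) 0) as [E|E].
    + rewrite E, HA. cbn [INR]. unfold Rdiv. ring.
    + assert (N <> 0%nat) by (intros ->; specialize (Hc 0%nat); lia).
      field. split; apply not_0_INR; auto.
  - replace (a / 2) with (a * (1 / 2)) by field.
    apply is_lim_seq_mult'; [|now apply is_lim_seq_about_half].
    apply (is_lim_seq_subseq (fun N => INR (A N) / INR N)); [|exact Hl].
    intros P [N0 HP]. exists (2 * N0 + 2)%nat. intros n Hn. apply HP.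
    specialize (Hc n). lia.
Qed.

Lemma is_lim_seq_ratio_halves (A B : nat -> nat) (a b : R) :
  A 0%nat = 0%nat -> B 0%nat = 0%nat ->
  is_lim_seq (fun N => INR (A N) / INR N) a ->
  is_lim_seq (fun N => INR (B N) / INR N) b ->
  is_lim_seq (fun N => INR (A ((N + 1) / 2) + B (N / 2))%nat / INR N) ((a + b) / 2).
Proof.
  intros HA HB Ha Hb.
  apply (is_lim_seq_ext (fun N => INR (A ((N + 1) / 2)%nat) / INR N + INR (B (N / 2))%nat / INR N)).
  - intros N. rewrite plus_INR. unfold Rdiv. ring.
  - replace ((a + b) / 2) with (a / 2 + b / 2) by field.
    apply is_lim_seq_plus';
      apply is_lim_seq_ratio_about_half; auto using about_half_ceil, about_half_floor.
Qed.

Lemma is_lim_freq_zero (j : Z) : is_lim_seq (freq j 0) (dirac0 j).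
Proof.
  apply (is_lim_seq_ext_loc (fun _ => dirac0 j)); [|apply is_lim_seq_const].
  exists 1%nat. intros n Hn. unfold freq, dirac0. rewrite cnt_zero.
  destruct (Z.eqb j 0).
  - field. apply not_0_INR. lia.
  - cbn [INR]. unfold Rdiv. ring.
Qed.

Lemma is_lim_freq_double (j : Z) (u : nat) (a : R) :
  is_lim_seq (freq j u) a -> is_lim_seq (freq j (2 * u)) a.
Proof.
  intros Ha. replace a with ((a + a) / 2) by field.
  apply (is_lim_seq_ext (fun N => INR (cnt j u ((N + 1) / 2) + cnt j u (N / 2))%nat / INR N)).
  - intros N. unfold freq. now rewrite cnt_double.
  - now apply is_lim_seq_ratio_halves.
Qed.

Lemma is_lim_freq_succ_double (j : Z) (u : nat) (a b : R) :
  is_lim_seq (freq (j - 1) u) a -> is_lim_seq (freq (j + 1) (u + 1)) b ->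
  is_lim_seq (freq j (2 * u + 1)) ((a + b) / 2).
Proof.
  intros Ha Hb.
  apply (is_lim_seq_ext
           (fun N => INR (cnt (j - 1) u ((N + 1) / 2) + cnt (j + 1) (u + 1) (N / 2))%nat / INR N)).
  - intros N. unfold freq. now rewrite cnt_succ_double.
  - now apply is_lim_seq_ratio_halves.
Qed.

Lemma cnt_one_ge2 (j : Z) (N : nat) : (2 <= j)%Z -> cnt j 1 N = 0%nat.
Proof.
  revert j. induction N as [N IH] using lt_wf_ind. intros j Hj.
  rewrite (cnt_succ_double j 0), cnt_zero.
  destruct (Z.eqb_spec (j - 1) 0); [lia|].
  destruct N as [|N]; [reflexivity|].
  rewrite IH; [reflexivity| |lia]. apply Nat.div_lt; lia.
Qed.

Lemma is_lim_freq_one_ge2 (j : Z) : (2 <= j)%Z -> is_lim_seq (freq j 1) 0.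
Proof.
  intros Hj. apply (is_lim_seq_ext (fun _ => 0)); [|apply is_lim_seq_const].
  intros n. unfold freq. rewrite cnt_one_ge2 by exact Hj. cbn [INR]. unfold Rdiv. ring.
Qed.

Lemma ex_lim_freq_one (j : Z) : ex_finite_lim_seq (freq j 1).
Proof.
  destruct (Z_le_gt_dec 2 j) as [Hj|Hj]; [eexists; now apply is_lim_freq_one_ge2|].
  replace j with (1 - Z.of_nat (Z.to_nat (1 - j)))%Z by lia.
  induction (Z.to_nat (1 - j)) as [|i [l IH]].
  - exists ((dirac0 0 + 0) / 2).
    apply (is_lim_freq_succ_double _ 0); [apply is_lim_freq_zero|].
    apply is_lim_freq_one_ge2. lia.
  - exists ((dirac0 (1 - Z.of_nat (S i) - 1) + l) / 2).
    apply (is_lim_freq_succ_double _ 0); [apply is_lim_freq_zero|].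
    now replace (1 - Z.of_nat (S i) + 1)%Z with (1 - Z.of_nat i)%Z by lia.
Qed.

Lemma ex_lim_freq (j : Z) (t : nat) : ex_finite_lim_seq (freq j t).
Proof.
  revert j. induction t as [| | u _ IH | u _ IHu IHu1] using binary_ind; intros j.
  - eexists. apply is_lim_freq_zero.
  - apply ex_lim_freq_one.
  - destruct (IH j) as [l Hl]. exists l. now apply is_lim_freq_double.
  - destruct (IHu (j - 1)%Z) as [a Ha], (IHu1 (j + 1)%Z) as [b Hb].
    eexists. exact (is_lim_freq_succ_double j u a b Ha Hb).
Qed.

Lemma delta_unique (j : Z) (t : nat) (l : R) : is_lim_seq (freq j t) l -> delta j t = l.
Proof.
  intros Hl. unfold delta.
  change (Lim_seq (fun N => INR (cnt j t N) / INR N)) with (Lim_seq (freq j t)).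
  now rewrite (is_lim_seq_unique _ _ Hl).
Qed.

Lemma delta_spec (j : Z) (t : nat) : is_lim_seq (freq j t) (delta j t).
Proof. destruct (ex_lim_freq j t) as [l Hl]. now rewrite (delta_unique _ _ _ Hl). Qed.

Lemma delta_zero (j : Z) : delta j 0 = dirac0 j.
Proof. apply delta_unique, is_lim_freq_zero. Qed.

Lemma delta_double (j : Z) (u : nat) : delta j (2 * u) = delta j u.
Proof. apply delta_unique, is_lim_freq_double, delta_spec. Qed.

Lemma delta_succ_double (j : Z) (u : nat) :
  delta j (2 * u + 1) = (delta (j - 1) u + delta (j + 1) (u + 1)) / 2.
Proof. apply delta_unique, is_lim_freq_succ_double; apply delta_spec. Qed.

Lemma delta_bounds (j : Z) (t : nat) : 0 <= delta j t <= 1.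
Proof.
  pose proof (delta_spec j t) as Hl.
  split.
  - apply (is_lim_seq_le (fun _ => 0) (freq j t) 0 (delta j t)); auto using is_lim_seq_const.
    intros N. apply freq_bounds.
  - apply (is_lim_seq_le (freq j t) (fun _ => 1) (delta j t) 1); auto using is_lim_seq_const.
    intros N. apply freq_bounds.
Qed.

Lemma delta_gt (j : Z) (t : nat) : (Z.of_nat t < j)%Z -> delta j t = 0.
Proof.
  revert j. induction t as [| | u _ IH | u _ IHu IHu1] using binary_ind; intros j Hj.
  - rewrite delta_zero. unfold dirac0. destruct (Z.eqb_spec j 0); [lia|reflexivity].
  - apply delta_unique, is_lim_freq_one_ge2. lia.
  - rewrite delta_double. apply IH. lia.
  - rewrite delta_succ_double, IHu, IHu1 by lia. field.
Qed.

Lemma delta_one_neg (k : nat) : delta (- Z.of_nat k) 1 * 2 ^ S k <= 1.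
Proof.
  induction k as [|k IH].
  - rewrite (delta_succ_double _ 0), delta_zero. cbn. unfold dirac0. cbn.
    pose proof (delta_bounds 1 1). lra.
  - rewrite (delta_succ_double _ 0), delta_zero. unfold dirac0.
    destruct (Z.eqb_spec (- Z.of_nat (S k) - 1) 0); [lia|].
    replace (- Z.of_nat (S k) + 1)%Z with (- Z.of_nat k)%Z by lia.
    change (0 + 1)%nat with 1%nat. cbn [pow] in *. lra.
Qed.

Lemma delta_neg_tail (t : nat) :
  exists C, 0 <= C /\ forall k : nat, delta (- Z.of_nat k) t * 2 ^ k <= C.
Proof.
  induction t as [| | u _ [C [HC0 HC]] | u _ [C1 [HC10 HC1]] [C2 [HC20 HC2]]] using binary_ind.
  - exists 1. split; [lra|]. intros k. rewrite delta_zero. unfold dirac0.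
    destruct (Z.eqb_spec (- Z.of_nat k) 0) as [E|E].
    + replace k with 0%nat by lia. cbn. lra.
    + lra.
  - exists 1. split; [lra|]. intros k.
    pose proof (delta_one_neg k). pose proof (delta_bounds (- Z.of_nat k) 1).
    cbn [pow] in *. pose proof (pow_lt 2 k ltac:(lra)). nra.
  - exists C. split; [exact HC0|]. intros k. rewrite delta_double. apply HC.
  - exists (C1 / 2 + 2 * C2 + 1). split; [lra|]. intros k.
    assert (H1 : delta (- Z.of_nat k - 1) u * 2 ^ k <= C1 / 2).
    { pose proof (HC1 (S k)) as H. cbn [pow] in H.
      replace (- Z.of_nat (S k))%Z with (- Z.of_nat k - 1)%Z in H by lia. lra. }
    assert (H2 : delta (- Z.of_nat k + 1) (u + 1) * 2 ^ k <= 2 * C2 + 1).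
    { destruct k as [|k].
      - pose proof (delta_bounds (- Z.of_nat 0 + 1) (u + 1)). cbn [pow]. lra.
      - pose proof (HC2 k) as H. cbn [pow].
        replace (- Z.of_nat (S k) + 1)%Z with (- Z.of_nat k)%Z by lia. lra. }
    rewrite delta_succ_double.
    pose proof (delta_bounds (- Z.of_nat k - 1) u).
    pose proof (delta_bounds (- Z.of_nat k + 1) (u + 1)). lra.
Qed.

(** * Sums over ℤ and the moments of [delta] *)

Lemma is_series_0 : is_series (fun _ : nat => 0) 0.
Proof.
  pose proof (is_series_scal_r 0 _ _ (is_series_geom (1 / 2) ltac:(rewrite Rabs_pos_eq; lra))) as H.
  rewrite Rmult_0_r in H. exact (is_series_ext _ _ _ (fun n => Rmult_0_r _) H).
Qed.

Lemma ex_series_R_incr_1 (a : nat -> R) : ex_series a <-> ex_series (fun k => a (S k)).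
Proof. exact (@ex_series_incr_1 R_AbsRing R_NormedModule a). Qed.

Lemma ex_series_eventually_0 (a : nat -> R) (n : nat) :
  (forall k, (n <= k)%nat -> a k = 0) -> ex_series a.
Proof.
  intros Ha. apply (@ex_series_incr_n R_AbsRing R_NormedModule a n).
  exists 0. apply (is_series_ext (fun _ => 0)); [|apply is_series_0].
  intros k. symmetry. apply Ha. lia.
Qed.

Definition on_nonneg (f : Z -> R) (k : nat) : R := f (Z.of_nat k).
Definition on_neg (f : Z -> R) (k : nat) : R := f (- Z.of_nat (S k))%Z.

Definition zsummable (f : Z -> R) : Prop := ex_series (on_nonneg f) /\ ex_series (on_neg f).
Definition zsum (f : Z -> R) : R := Series (on_nonneg f) + Series (on_neg f).

Lemma zsum_ext (f g : Z -> R) : (forall i, f i = g i) -> zsum f = zsum g.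
Proof. intros E. unfold zsum. f_equal; apply Series_ext; intros n; apply E. Qed.

Lemma zsummable_ext (f g : Z -> R) : (forall i, f i = g i) -> zsummable f -> zsummable g.
Proof.
  intros E [Hp Hn]. split; [apply (ex_series_ext (on_nonneg f))|apply (ex_series_ext (on_neg f))];
    auto; intros n; apply E.
Qed.

Lemma zsummable_plus (f g : Z -> R) :
  zsummable f -> zsummable g -> zsummable (fun i => f i + g i).
Proof.
  intros [Hfp Hfn] [Hgp Hgn].
  split; [apply (ex_series_ext (fun n => plus (on_nonneg f n) (on_nonneg g n)))
         |apply (ex_series_ext (fun n => plus (on_neg f n) (on_neg g n)))];
    try reflexivity; now apply (@ex_series_plus R_AbsRing R_NormedModule).
Qed.

Lemma zsum_plus (f g : Z -> R) :
  zsummable f -> zsummable g -> zsum (fun i => f i + g i) = zsum f + zsum g.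
Proof.
  intros [Hfp Hfn] [Hgp Hgn].
  change (zsum (fun i => f i + g i)) with
    (Series (fun n => on_nonneg f n + on_nonneg g n) + Series (fun n => on_neg f n + on_neg g n)).
  unfold zsum.
  rewrite (Series_plus (on_nonneg f) (on_nonneg g)), (Series_plus (on_neg f) (on_neg g)) by auto.
  ring.
Qed.

Lemma zsummable_scal (c : R) (f : Z -> R) : zsummable f -> zsummable (fun i => c * f i).
Proof.
  intros [Hp Hn].
  split; [apply (ex_series_ext (fun n => scal c (on_nonneg f n)))
         |apply (ex_series_ext (fun n => scal c (on_neg f n)))];
    try reflexivity; now apply (@ex_series_scal_l R_AbsRing R_NormedModule).
Qed.

Lemma zsum_scal (c : R) (f : Z -> R) : zsum (fun i => c * f i) = c * zsum f.
Proof.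
  change (zsum (fun i => c * f i)) with
    (Series (fun n => c * on_nonneg f n) + Series (fun n => c * on_neg f n)).
  unfold zsum. rewrite (Series_scal_l c (on_nonneg f)), (Series_scal_l c (on_neg f)). ring.
Qed.

Lemma zsummable_succ (f : Z -> R) : zsummable f -> zsummable (fun i => f (i + 1)%Z).
Proof.
  intros [Hp Hn]. split.
  - apply (ex_series_ext (fun k => on_nonneg f (S k)));
      [|now apply (ex_series_R_incr_1 (on_nonneg f))].
    intros k. unfold on_nonneg. f_equal. lia.
  - apply ex_series_R_incr_1. apply (ex_series_ext (on_neg f)); [|exact Hn].
    intros k. unfold on_neg. f_equal. lia.
Qed.

Lemma zsum_succ (f : Z -> R) : zsummable f -> zsum (fun i => f (i + 1)%Z) = zsum f.
Proof.
  intros Hf. pose proof (zsummable_succ f Hf) as [Hp' Hn']. destruct Hf as [Hp Hn]. unfold zsum.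
  rewrite (Series_incr_1 (on_neg _)), (Series_incr_1 (on_nonneg f)) by auto.
  rewrite (Series_ext (on_nonneg _) (fun k => on_nonneg f (S k))),
          (Series_ext (fun k => on_neg _ (S k)) (on_neg f)).
  - unfold on_nonneg, on_neg. cbn. ring.
  - intros k. unfold on_neg. f_equal. lia.
  - intros k. unfold on_nonneg. f_equal. lia.
Qed.

Lemma zsummable_pred (f : Z -> R) : zsummable f -> zsummable (fun i => f (i - 1)%Z).
Proof.
  intros [Hp Hn]. split.
  - apply ex_series_R_incr_1. apply (ex_series_ext (on_nonneg f)); [|exact Hp].
    intros k. unfold on_nonneg. f_equal. lia.
  - apply (ex_series_ext (fun k => on_neg f (S k))); [|now apply (ex_series_R_incr_1 (on_neg f))].
    intros k. unfold on_neg. f_equal. lia.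
Qed.

Lemma zsum_pred (f : Z -> R) : zsummable f -> zsum (fun i => f (i - 1)%Z) = zsum f.
Proof.
  intros Hf. pose proof (zsummable_pred f Hf) as [Hp' Hn']. destruct Hf as [Hp Hn]. unfold zsum.
  rewrite (Series_incr_1 (on_nonneg _)), (Series_incr_1 (on_neg f)) by auto.
  rewrite (Series_ext (fun k => on_nonneg _ (S k)) (on_nonneg f)),
          (Series_ext (on_neg _) (fun k => on_neg f (S k))).
  - unfold on_nonneg, on_neg. cbn. ring.
  - intros k. unfold on_neg. f_equal. lia.
  - intros k. unfold on_nonneg. f_equal. lia.
Qed.

Lemma zsum_dirac0 (w : Z -> R) : zsum (fun i => dirac0 i * w i) = w 0%Z.
Proof.
  assert (Hzero : forall k, dirac0 (Z.of_nat (S k)) = 0 /\ dirac0 (- Z.of_nat (S k)) = 0).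
  { intros k. unfold dirac0. split; rewrite (proj2 (Z.eqb_neq _ _)) by lia; reflexivity. }
  assert (Hp : ex_series (on_nonneg (fun i => dirac0 i * w i))).
  { apply (ex_series_eventually_0 _ 1). intros [|k] Hk; [lia|].
    unfold on_nonneg. rewrite (proj1 (Hzero k)). apply Rmult_0_l. }
  unfold zsum. rewrite Series_incr_1 by exact Hp.
  rewrite (Series_ext _ (fun _ => 0)), (Series_ext (on_neg _) (fun _ => 0)),
          (is_series_unique _ _ is_series_0).
  - unfold on_nonneg, dirac0. cbn. ring.
  - intros k. unfold on_neg. rewrite (proj2 (Hzero k)). ring.
  - intros k. unfold on_nonneg. rewrite (proj1 (Hzero k)). ring.
Qed.

Lemma pow2_mul_cube_le (k : nat) : (2 ^ k * (k + 2) ^ 3 <= 512 * 3 ^ k)%nat.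
Proof.
  assert (Hstep : forall n, (2 ^ (n + 7) * (n + 9) ^ 3 <= 512 * 3 ^ (n + 7))%nat).
  { induction n as [|n IH]; [apply Nat.leb_le; reflexivity|].
    replace (S n + 7)%nat with (S (n + 7)) by lia.
    rewrite (Nat.pow_succ_r' 2), (Nat.pow_succ_r' 3).
    assert (Hcube : (2 * (S n + 9) ^ 3 <= 3 * (n + 9) ^ 3)%nat) by (cbn [Nat.pow]; nia).
    nia. }
  destruct (le_lt_dec 7 k) as [Hk|Hk].
  - specialize (Hstep (k - 7)%nat).
    replace (k - 7 + 7)%nat with k in Hstep by lia.
    now replace (k - 7 + 9)%nat with (k + 2)%nat in Hstep by lia.
  - do 7 (destruct k as [|k]; [apply Nat.leb_le; reflexivity|]). lia.
Qed.

Lemma cube_le_three_halves_pow (k : nat) : (INR k + 2) ^ 3 <= 512 * (3 / 2) ^ k.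
Proof.
  pose proof (le_INR _ _ (pow2_mul_cube_le k)) as H.
  rewrite !mult_INR, !pow_INR, plus_INR in H.
  replace (INR 2) with 2 in H by reflexivity.
  replace (INR 3) with 3 in H by (rewrite INR_IZR_INZ; reflexivity).
  replace (INR 512) with 512 in H by (rewrite INR_IZR_INZ; reflexivity).
  pose proof (pow_lt 2 k ltac:(lra)) as Hp.
  replace ((3 / 2) ^ k) with (3 ^ k / 2 ^ k)
    by (unfold Rdiv; rewrite Rpow_mult_distr, pow_inv; reflexivity).
  apply Rmult_le_reg_l with (2 ^ k); [exact Hp|].
  replace (2 ^ k * (512 * (3 ^ k / 2 ^ k))) with (512 * 3 ^ k) by (field; lra).
  lra.
Qed.

Lemma delta_neg_weighted_le (t k : nat) (w : Z -> R) (A C : R) :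
  0 <= A -> (forall i, Rabs (w i) <= A * (IZR (Z.abs i) + 1) ^ 3) ->
  delta (- Z.of_nat (S k)) t * 2 ^ S k <= C ->
  Rabs (delta (- Z.of_nat (S k)) t * w (- Z.of_nat (S k))%Z) <= 256 * C * A * (3 / 4) ^ k.
Proof.
  intros HA Hw Hd2. set (d := delta (- Z.of_nat (S k)) t) in *.
  assert (Hd : 0 <= d) by apply delta_bounds.
  assert (Hwk : Rabs (w (- Z.of_nat (S k))%Z) <= A * (512 * (3 / 2) ^ k)).
  { eapply Rle_trans; [apply Hw|]. apply Rmult_le_compat_l; [exact HA|].
    replace (IZR (Z.abs (- Z.of_nat (S k))) + 1) with (INR k + 2)
      by (rewrite Z.abs_opp, Z.abs_eq, <- INR_IZR_INZ, S_INR by lia; ring).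
    apply cube_le_three_halves_pow. }
  assert (Hsplit : (3 / 2) ^ k = (3 / 4) ^ k * 2 ^ k)
    by (rewrite <- Rpow_mult_distr; f_equal; field).
  pose proof (pow_le (3 / 4) k ltac:(lra)).
  rewrite Rabs_mult, (Rabs_pos_eq d Hd), Hsplit in *. cbn [pow] in Hd2.
  apply Rle_trans with (d * (A * (512 * ((3 / 4) ^ k * 2 ^ k)))); [now apply Rmult_le_compat_l|].
  replace (d * (A * (512 * ((3 / 4) ^ k * 2 ^ k))))
    with (256 * A * (3 / 4) ^ k * (d * (2 * 2 ^ k))) by ring.
  replace (256 * C * A * (3 / 4) ^ k) with (256 * A * (3 / 4) ^ k * C) by ring.
  apply Rmult_le_compat_l; [|exact Hd2]. apply Rmult_le_pos; lra.
Qed.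

Lemma zsummable_delta (t : nat) (w : Z -> R) (A : R) :
  (forall i, Rabs (w i) <= A * (IZR (Z.abs i) + 1) ^ 3) ->
  zsummable (fun i => delta i t * w i).
Proof.
  intros Hw. split.
  - apply (ex_series_eventually_0 _ (S t)). intros n Hn.
    unfold on_nonneg. rewrite delta_gt by lia. apply Rmult_0_l.
  - destruct (delta_neg_tail t) as [C [HC Htail]].
    assert (HA : 0 <= A) by (specialize (Hw 0%Z); pose proof (Rabs_pos (w 0%Z)); cbn in Hw; lra).
    apply (@ex_series_le R_AbsRing R_CompleteNormedModule _ (fun k => 256 * C * A * (3 / 4) ^ k)).
    + intros k. apply (delta_neg_weighted_le t k w A C HA Hw (Htail (S k))).
    + apply (@ex_series_scal_l R_AbsRing R_NormedModule), ex_series_geom.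
      rewrite Rabs_pos_eq; lra.
Qed.

Lemma zsummable_delta_shifted_pow (t m : nat) (c : R) :
  (m <= 3)%nat -> Rabs c <= 1 -> zsummable (fun i => delta i t * (IZR i + c) ^ m).
Proof.
  intros Hm Hc. apply (zsummable_delta t _ 1). intros i. rewrite Rmult_1_l, <- RPow_abs.
  assert (Hi : Rabs (IZR i + c) <= IZR (Z.abs i) + 1)
    by (rewrite abs_IZR; eapply Rle_trans; [apply Rabs_triang|lra]).
  assert (H1 : 1 <= IZR (Z.abs i) + 1) by (pose proof (IZR_le 0 _ (Z.abs_nonneg i)); lra).
  apply Rle_trans with ((IZR (Z.abs i) + 1) ^ m).
  - apply pow_incr. split; [apply Rabs_pos|exact Hi].
  - now apply Rle_pow.
Qed.

Lemma moment_zsum (m t : nat) : moment m t = zsum (fun i => delta i t * IZR i ^ m).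
Proof.
  unfold moment, zsum, on_nonneg, on_neg. f_equal; apply Series_ext; intros n.
  - now rewrite <- INR_IZR_INZ.
  - now rewrite opp_IZR, <- INR_IZR_INZ.
Qed.

Lemma zsummable_delta_pow (t m : nat) :
  (m <= 3)%nat -> zsummable (fun i => delta i t * IZR i ^ m).
Proof.
  intros Hm. apply (zsummable_ext (fun i => delta i t * (IZR i + 0) ^ m)).
  - intros i. now rewrite Rplus_0_r.
  - apply zsummable_delta_shifted_pow; [exact Hm|rewrite Rabs_R0; lra].
Qed.

Lemma zsum_delta_cubic (t : nat) (P : Z -> R) (a0 a1 a2 a3 : R) :
  (forall i, P i = a0 + a1 * IZR i + a2 * IZR i ^ 2 + a3 * IZR i ^ 3) ->
  zsum (fun i => delta i t * P i)
  = a0 * moment 0 t + a1 * moment 1 t + a2 * moment 2 t + a3 * moment 3 t.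
Proof.
  intros HP. rewrite !moment_zsum, <- !zsum_scal.
  pose (term m a := fun i => a * (delta i t * IZR i ^ m)).
  assert (Hterm : forall m a, (m <= 3)%nat -> zsummable (term m a))
    by (intros; apply zsummable_scal, zsummable_delta_pow; assumption).
  rewrite <- !zsum_plus by (repeat apply zsummable_plus; apply Hterm; lia).
  apply zsum_ext. intros i. rewrite HP. cbn. ring.
Qed.

Lemma moment_zero (m : nat) : moment m 0 = 0 ^ m.
Proof.
  rewrite moment_zsum, <- (zsum_dirac0 (fun i => IZR i ^ m)).
  apply zsum_ext. intros i. now rewrite delta_zero.
Qed.

Lemma moment_double (m u : nat) : moment m (2 * u) = moment m u.
Proof. rewrite !moment_zsum. apply zsum_ext. intros i. now rewrite delta_double. Qed.

Lemma moment_succ_double_zsum (m u : nat) : (m <= 3)%nat ->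
  moment m (2 * u + 1) = (zsum (fun i => delta i u * (IZR i + 1) ^ m)
                          + zsum (fun i => delta i (u + 1) * (IZR i - 1) ^ m)) / 2.
Proof.
  intros Hm.
  set (F := fun i => delta i u * (IZR i + 1) ^ m).
  set (G := fun i => delta i (u + 1) * (IZR i - 1) ^ m).
  assert (HF : zsummable F)
    by (apply zsummable_delta_shifted_pow; [exact Hm|rewrite Rabs_R1; lra]).
  assert (HG : zsummable G).
  { apply (zsummable_ext (fun i => delta i (u + 1) * (IZR i + -1) ^ m)); [reflexivity|].
    apply zsummable_delta_shifted_pow; [exact Hm|unfold Rabs; destruct (Rcase_abs (-1)); lra]. }
  rewrite <- (zsum_pred F HF), <- (zsum_succ G HG).
  replace ((zsum (fun i => F (i - 1)%Z) + zsum (fun i => G (i + 1)%Z)) / 2)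
    with (zsum (fun i => / 2 * F (i - 1)%Z + / 2 * G (i + 1)%Z)).
  - rewrite moment_zsum. apply zsum_ext. intros i. unfold F, G.
    rewrite delta_succ_double, minus_IZR, plus_IZR.
    replace (IZR i - 1 + 1) with (IZR i) by ring. replace (IZR i + 1 - 1) with (IZR i) by ring.
    field.
  - rewrite zsum_plus, !zsum_scal
      by (apply zsummable_scal; auto using zsummable_pred, zsummable_succ).
    field.
Qed.

Lemma moment0_succ_double (u : nat) :
  moment 0 (2 * u + 1) = (moment 0 u + moment 0 (u + 1)) / 2.
Proof.
  rewrite moment_succ_double_zsum by lia.
  rewrite (zsum_delta_cubic u _ 1 0 0 0), (zsum_delta_cubic (u + 1) _ 1 0 0 0) by (intros; ring).
  field.
Qed.

Lemma moment1_succ_double (u : nat) :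
  moment 1 (2 * u + 1) = (moment 1 u + moment 0 u + moment 1 (u + 1) - moment 0 (u + 1)) / 2.
Proof.
  rewrite moment_succ_double_zsum by lia.
  rewrite (zsum_delta_cubic u _ 1 1 0 0), (zsum_delta_cubic (u + 1) _ (-1) 1 0 0) by (intros; ring).
  field.
Qed.

Lemma moment0_eq (t : nat) : moment 0 t = 1.
Proof.
  induction t as [| | u _ IH | u _ IHu IHu1] using binary_ind.
  - rewrite moment_zero. reflexivity.
  - pose proof (moment0_succ_double 0) as H. rewrite moment_zero in H.
    cbn [pow Nat.mul Nat.add] in H. lra.
  - now rewrite moment_double.
  - rewrite moment0_succ_double, IHu, IHu1. field.
Qed.

Lemma moment1_eq (t : nat) : moment 1 t = 0.
Proof.
  induction t as [| | u _ IH | u _ IHu IHu1] using binary_ind.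
  - rewrite moment_zero. apply Rmult_0_l.
  - pose proof (moment1_succ_double 0) as H. rewrite !moment0_eq, moment_zero in H.
    cbn [pow Nat.mul Nat.add] in H. lra.
  - now rewrite moment_double.
  - rewrite moment1_succ_double, IHu, IHu1, !moment0_eq. field.
Qed.

Lemma moment2_succ_double (u : nat) :
  moment 2 (2 * u + 1) = (moment 2 u + moment 2 (u + 1)) / 2 + 1.
Proof.
  rewrite moment_succ_double_zsum by lia.
  rewrite (zsum_delta_cubic u _ 1 2 1 0), (zsum_delta_cubic (u + 1) _ 1 (-2) 1 0) by (intros; ring).
  rewrite !moment0_eq, !moment1_eq. field.
Qed.

Lemma moment3_succ_double (u : nat) :
  moment 3 (2 * u + 1)
  = (moment 3 u + moment 3 (u + 1)) / 2 + 3 / 2 * (moment 2 u - moment 2 (u + 1)).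
Proof.
  rewrite moment_succ_double_zsum by lia.
  rewrite (zsum_delta_cubic u _ 1 3 3 1), (zsum_delta_cubic (u + 1) _ (-1) 3 (-3) 1)
    by (intros; ring).
  rewrite !moment0_eq, !moment1_eq. field.
Qed.

Lemma moment2_one : moment 2 1 = 2.
Proof.
  pose proof (moment2_succ_double 0) as H. rewrite moment_zero in H.
  cbn [pow Nat.mul Nat.add] in H. lra.
Qed.

Lemma moment3_one : moment 3 1 = -6.
Proof.
  pose proof (moment3_succ_double 0) as H. cbn [Nat.mul Nat.add] in H.
  rewrite !moment_zero, moment2_one in H. cbn [pow] in H. lra.
Qed.

Lemma D_moments (t : nat) : D t = moment 2 t - moment 3 t / 3.
Proof. unfold D, kappa. simpl. rewrite moment1_eq. field. Qed.

(** * Recursions for [D] and [mD] along binary digits *)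

Definition D_diff (t : nat) : R := D (t + 1) - D t.
Definition D_excess (t : nat) : R := 1 + (moment 2 (t + 1) - moment 2 t) / 2.

Lemma D_double (t : nat) : D (2 * t) = D t.
Proof. rewrite !D_moments, !moment_double. reflexivity. Qed.

Lemma D_succ_double (t : nat) : D (2 * t + 1) = (D t + D (t + 1)) / 2 + D_excess t.
Proof. unfold D_excess. rewrite !D_moments, moment2_succ_double, moment3_succ_double. field. Qed.

Lemma D_excess_double (t : nat) : D_excess (2 * t) = 1 + D_excess t / 2.
Proof. unfold D_excess. rewrite moment_double, moment2_succ_double. field. Qed.

Lemma D_excess_succ_double (t : nat) : D_excess (2 * t + 1) = D_excess t / 2.
Proof.
  unfold D_excess. replace (2 * t + 1 + 1)%nat with (2 * (t + 1))%nat by lia.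
  rewrite moment_double, moment2_succ_double. field.
Qed.

Lemma D_excess_bounds (t : nat) : 0 <= D_excess t <= 2.
Proof.
  induction t as [| | u _ IH | u _ IHu _] using binary_ind.
  - unfold D_excess. cbn [Nat.add]. rewrite moment2_one, moment_zero. cbn [pow]. lra.
  - unfold D_excess. change (1 + 1)%nat with (2 * 1)%nat.
    rewrite moment_double. lra.
  - rewrite D_excess_double. lra.
  - rewrite D_excess_succ_double. lra.
Qed.

Lemma D_diff_double (t : nat) : D_diff (2 * t) = D_diff t / 2 + D_excess t.
Proof. unfold D_diff. rewrite D_succ_double, D_double. field. Qed.

Lemma D_diff_succ_double (t : nat) : D_diff (2 * t + 1) = D_diff t / 2 - D_excess t.
Proof.
  unfold D_diff. replace (2 * t + 1 + 1)%nat with (2 * (t + 1))%nat by lia.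
  rewrite D_double, D_succ_double. field.
Qed.

Definition gain0 (g h : R) : R := Rmin 0 (g / 2 + h) - Rmin 0 g.
Definition gain1 (g h : R) : R := g / 2 + h + Rmin 0 (g / 2 - h) - Rmin 0 g.

Lemma mD_eq (t : nat) : mD t = D t + Rmin 0 (D_diff t).
Proof.
  unfold mD, D_diff, Rmin.
  destruct (Rle_dec (D t) (D (t + 1))), (Rle_dec 0 (D (t + 1) - D t)); lra.
Qed.

Lemma mD_double (t : nat) : mD (2 * t) = mD t + gain0 (D_diff t) (D_excess t).
Proof. rewrite !mD_eq, D_diff_double, D_double. unfold gain0. ring. Qed.

Lemma mD_succ_double (t : nat) : mD (2 * t + 1) = mD t + gain1 (D_diff t) (D_excess t).
Proof.
  rewrite !mD_eq, D_diff_succ_double, D_succ_double. unfold gain1, D_diff. field.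
Qed.

Lemma mD_one : mD 1 = 4.
Proof.
  unfold mD. rewrite !D_moments. change (1 + 1)%nat with (2 * 1)%nat.
  rewrite !moment_double, moment2_one, moment3_one. unfold Rmin. destruct (Rle_dec _ _); lra.
Qed.

Lemma gain0_nonneg (g h : R) : 0 <= h -> 0 <= gain0 g h.
Proof. intros. unfold gain0, Rmin. destruct (Rle_dec 0 (g / 2 + h)), (Rle_dec 0 g); lra. Qed.

Lemma gain1_nonneg (g h : R) : 0 <= h -> 0 <= gain1 g h.
Proof. intros. unfold gain1, Rmin. destruct (Rle_dec 0 (g / 2 - h)), (Rle_dec 0 g); lra. Qed.

Lemma gain0_D_nonneg (t : nat) : 0 <= gain0 (D_diff t) (D_excess t).
Proof. apply gain0_nonneg, D_excess_bounds. Qed.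

Lemma gain1_D_nonneg (t : nat) : 0 <= gain1 (D_diff t) (D_excess t).
Proof. apply gain1_nonneg, D_excess_bounds. Qed.

Lemma gain0_gain1_ge1 (gb hb g h : R) :
  0 <= hb -> 3 / 2 <= h -> Rmin (gb / 4 + hb + 1) 1 <= g -> 1 <= gain0 gb hb + gain1 g h.
Proof.
  intros. unfold gain0, gain1, Rmin in *.
  destruct (Rle_dec (gb / 4 + hb + 1) 1), (Rle_dec 0 (gb / 2 + hb)), (Rle_dec 0 gb),
    (Rle_dec 0 (g / 2 - h)), (Rle_dec 0 g); lra.
Qed.

Lemma INR_le_pow2 (l : nat) : INR l <= 2 ^ l.
Proof.
  induction l as [|l IH]; [cbn; lra|].
  rewrite S_INR. cbn [pow]. pose proof (pow_R1_Rle 2 l ltac:(lra)). lra.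
Qed.

Lemma gain1_gain0_ones_block (l : nat) (g0 h0 : R) : (1 <= l)%nat -> 1 <= h0 ->
  INR l / 2 ^ l <= gain1 g0 h0 + gain0 ((g0 - 2 * INR l * h0) / 2 ^ l) (h0 / 2 ^ l).
Proof.
  intros Hl Hh. set (P := 2 ^ l). set (L := INR l).
  assert (HP : 2 <= P) by (unfold P; destruct l as [|l]; [lia|]; cbn [pow];
                           pose proof (pow_R1_Rle 2 l ltac:(lra)); lra).
  assert (HLP : L <= P) by apply INR_le_pow2.
  assert (HL : 1 <= L) by (apply (le_INR 1); lia).
  apply Rmult_le_reg_r with P; [lra|].
  replace (L / P * P) with L by (field; lra).
  unfold gain1, gain0.
  set (g := (g0 - 2 * L * h0) / P). set (h := h0 / P).
  assert (Eg : g * P = g0 - 2 * L * h0) by (unfold g; field; lra).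
  assert (Eh : h * P = h0) by (unfold h; field; lra).
  unfold Rmin.
  destruct (Rle_dec 0 (g0 / 2 - h0)), (Rle_dec 0 g0), (Rle_dec 0 (g / 2 + h)), (Rle_dec 0 g); nra.
Qed.

(** * Runs of binary digits and the amortised argument *)

(* [rle (b :: l)] reduces to [push b (rle l)]. *)
Definition push (b : bool) (r : list (bool * nat)) : list (bool * nat) :=
  match r with
  | (c, n) :: r' => if Bool.eqb b c then (c, S n) :: r' else (b, 1%nat) :: (c, n) :: r'
  | [] => [(b, 1%nat)]
  end.

Lemma bits_double_add (t : nat) (b : bool) :
  (1 <= t)%nat -> bits (2 * t + Nat.b2n b) = b :: bits t.
Proof.
  intros Ht. unfold bits.
  replace (Nat.log2 (2 * t + Nat.b2n b)) with (S (Nat.log2 t))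
    by (destruct b; symmetry;
        [apply Nat.log2_succ_double|rewrite Nat.add_0_r; apply Nat.log2_double]; lia).
  change (seq 0 (S (S ?x))) with (0%nat :: seq 1 (S x)). rewrite <- seq_shift, map_cons, map_map.
  f_equal.
  - destruct b; [apply Nat.testbit_odd_0|rewrite Nat.add_0_r; apply Nat.testbit_even_0].
  - apply map_ext. intros i.
    destruct b; [apply Nat.testbit_odd_succ|rewrite Nat.add_0_r; apply Nat.testbit_even_succ]; lia.
Qed.

Lemma runs_double (t : nat) : (1 <= t)%nat -> runs (2 * t) = push false (runs t).
Proof.
  intros Ht. unfold runs. replace (2 * t)%nat with (2 * t + Nat.b2n false)%nat by (cbn; lia).
  exact (f_equal rle (bits_double_add t false Ht)).
Qed.

Lemma runs_succ_double (t : nat) : (1 <= t)%nat -> runs (2 * t + 1) = push true (runs t).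
Proof. intros Ht. unfold runs. exact (f_equal rle (bits_double_add t true Ht)). Qed.

Definition inner_long_zeros (r : list (bool * nat)) : nat :=
  length (filter (fun p => negb (fst p) && Nat.leb 2 (snd p)) (removelast (tl r))).

Definition short_ones (k : nat) (r : list (bool * nat)) : nat :=
  length (filter (fun p => fst p && Nat.leb (snd p) k) r).

Lemma inner_long_zeros_push_false (r : list (bool * nat)) :
  inner_long_zeros (push false r) = inner_long_zeros r.
Proof. now destruct r as [|[[|] n] [|p r]]. Qed.

Lemma short_ones_push_false (k : nat) (r : list (bool * nat)) :
  short_ones k (push false r) = short_ones k r.
Proof. now destruct r as [|[[|] n] r]. Qed.

Lemma inner_long_zeros_push_true (z : nat) (r : list (bool * nat)) : r <> [] ->
  inner_long_zeros (push true ((false, z) :: r))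
  = (Nat.b2n (Nat.leb 2 z) + inner_long_zeros ((false, z) :: r))%nat.
Proof.
  intros Hr. destruct r as [|p r]; [congruence|].
  unfold inner_long_zeros. cbn -[Nat.leb removelast].
  change (removelast ((false, z) :: p :: r)) with ((false, z) :: removelast (p :: r)).
  cbn -[Nat.leb removelast]. now destruct (Nat.leb 2 z).
Qed.

Lemma short_ones_cons (k : nat) (b : bool) (n : nat) (r : list (bool * nat)) :
  short_ones k ((b, n) :: r) = (Nat.b2n (b && Nat.leb n k) + short_ones k r)%nat.
Proof. unfold short_ones. cbn [filter fst snd]. now destruct (b && Nat.leb n k). Qed.

Section Potential.

Variables (k : nat) (w : R).
Hypothesis w_nonneg : 0 <= w.
Hypothesis w_le_ratio : forall l, (1 <= l <= k)%nat -> w <= INR l / 2 ^ l.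

Definition weight (l : nat) : R := if Nat.leb l k then w else 0.

Definition slack (t : nat) : R :=
  mD t - 4 - (1 - 2 * w) * INR (inner_long_zeros (runs t)) - w * INR (short_ones k (runs t)).

Lemma weight_bounds (l : nat) : 0 <= weight l <= w.
Proof. unfold weight. destruct (Nat.leb l k); lra. Qed.

Lemma weight_succ_le (l : nat) : weight (S l) <= weight l.
Proof.
  unfold weight. destruct (Nat.leb_spec (S l) k), (Nat.leb_spec l k); lia || lra.
Qed.

Lemma short_ones_cons_weight (b : bool) (l : nat) (r : list (bool * nat)) :
  w * INR (short_ones k ((b, l) :: r)) = (if b then weight l else 0) + w * INR (short_ones k r).
Proof.
  rewrite short_ones_cons, plus_INR. unfold weight.
  destruct b, (Nat.leb l k); cbn [andb Nat.b2n INR]; ring.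
Qed.

Lemma weight_ones_block (l : nat) (g0 h0 : R) : (1 <= l)%nat -> 1 <= h0 ->
  weight l <= gain1 g0 h0 + gain0 ((g0 - 2 * INR l * h0) / 2 ^ l) (h0 / 2 ^ l).
Proof.
  intros Hl Hh. pose proof (gain1_gain0_ones_block l g0 h0 Hl Hh). unfold weight.
  destruct (Nat.leb_spec l k).
  - pose proof (w_le_ratio l ltac:(lia)). lra.
  - apply Rplus_le_le_0_compat; [apply gain1_nonneg; lra|].
    apply gain0_nonneg, Rdiv_le_0_compat; [lra|apply pow_lt; lra].
Qed.

Lemma slack_double (t : nat) : (1 <= t)%nat ->
  slack (2 * t) = slack t + gain0 (D_diff t) (D_excess t).
Proof.
  intros Ht. unfold slack.
  rewrite runs_double, mD_double, inner_long_zeros_push_false, short_ones_push_false by exact Ht.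
  ring.
Qed.

Lemma slack_succ_double_ones (t l : nat) (r : list (bool * nat)) :
  (1 <= t)%nat -> runs t = (true, l) :: r ->
  slack (2 * t + 1) = slack t + gain1 (D_diff t) (D_excess t) - (weight (S l) - weight l).
Proof.
  intros Ht Hr. unfold slack.
  rewrite runs_succ_double, mD_succ_double, Hr by exact Ht. cbn [push Bool.eqb].
  change (inner_long_zeros ((true, S l) :: r)) with (inner_long_zeros ((true, l) :: r)).
  rewrite !short_ones_cons_weight. ring.
Qed.

Lemma slack_succ_double_zeros (t z : nat) (r : list (bool * nat)) :
  (1 <= t)%nat -> runs t = (false, z) :: r -> r <> [] ->
  slack (2 * t + 1)
  = slack t + gain1 (D_diff t) (D_excess t) - weight 1
    - (1 - 2 * w) * INR (Nat.b2n (Nat.leb 2 z)).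
Proof.
  intros Ht Hr Hr'. unfold slack.
  rewrite runs_succ_double, mD_succ_double, Hr, inner_long_zeros_push_true by assumption.
  cbn [push Bool.eqb]. rewrite plus_INR, !short_ones_cons_weight. ring.
Qed.

Definition ones_only (t : nat) : Prop :=
  exists l, runs t = [(true, l)] /\ - w <= slack t.

(* In the states below, [gb], [hb] (resp. [g0], [h0]) are the values of [D_diff] and [D_excess]
   just before the current block of 0s (resp. 1s) began, and [sg] (resp. [tau]) is credit
   carried over from earlier blocks. *)
Definition zeros_credit (t : nat) (sg gb hb : R) : Prop :=
  0 <= hb /\ - w <= sg /\ 0 <= sg + gain0 gb hb /\ - w + sg + gain0 gb hb <= slack t.

Definition single_zero (t : nat) : Prop :=
  exists r sg gb hb, runs t = (false, 1%nat) :: r /\ r <> [] /\ zeros_credit t sg gb hb /\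
    D_diff t = gb / 2 + hb /\ D_excess t = 1 + hb / 2.

Definition long_zeros (t : nat) : Prop :=
  exists z r sg gb hb, runs t = (false, z) :: r /\ (2 <= z)%nat /\ r <> [] /\
    zeros_credit t sg gb hb /\ 3 / 2 <= D_excess t /\ Rmin (gb / 4 + hb + 1) 1 <= D_diff t.

Definition ones_after_single_zero (t : nat) : Prop :=
  exists l r tau g0 h0, runs t = (true, l) :: (false, 1%nat) :: r /\ (1 <= l)%nat /\
    0 <= tau /\ 1 <= h0 /\ D_diff t = (g0 - 2 * INR l * h0) / 2 ^ l /\ D_excess t = h0 / 2 ^ l /\
    - w + tau - weight l + gain1 g0 h0 <= slack t.

Definition ones_after_long_zeros (t : nat) : Prop :=
  exists l z r, runs t = (true, l) :: (false, z) :: r /\ (2 <= z)%nat /\ - weight l <= slack t.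

Definition reachable (t : nat) : Prop :=
  ones_only t \/ single_zero t \/ long_zeros t \/ ones_after_single_zero t \/
  ones_after_long_zeros t.

Lemma ones_only_double (t : nat) : (1 <= t)%nat -> ones_only t -> single_zero (2 * t).
Proof.
  intros Ht [l [Hr Hs]]. exists [(true, l)], 0, (D_diff t), (D_excess t). unfold zeros_credit.
  rewrite runs_double, Hr, slack_double, D_diff_double, D_excess_double by exact Ht.
  pose proof (D_excess_bounds t). pose proof (gain0_D_nonneg t).
  repeat split; try discriminate; lra.
Qed.

Lemma ones_only_succ_double (t : nat) : (1 <= t)%nat -> ones_only t -> ones_only (2 * t + 1).
Proof.
  intros Ht [l [Hr Hs]]. exists (S l).
  rewrite runs_succ_double, Hr by exact Ht. split; [reflexivity|].
  rewrite (slack_succ_double_ones t l []) by assumption.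
  pose proof (weight_succ_le l). pose proof (gain1_D_nonneg t). lra.
Qed.

Lemma single_zero_double (t : nat) : (1 <= t)%nat -> single_zero t -> long_zeros (2 * t).
Proof.
  intros Ht (r & sg & gb & hb & Hr & Hr' & [Hhb [Hsg [Hc Hs]]] & Hg & Hh).
  exists 2%nat, r, sg, gb, hb. unfold zeros_credit.
  rewrite runs_double, Hr, slack_double, D_diff_double, D_excess_double by exact Ht.
  pose proof (gain0_D_nonneg t).
  assert (Hmin : Rmin (gb / 4 + hb + 1) 1 <= gb / 4 + hb + 1) by apply Rmin_l.
  repeat split; auto; lra.
Qed.

Lemma long_zeros_double (t : nat) : (1 <= t)%nat -> long_zeros t -> long_zeros (2 * t).
Proof.
  intros Ht (z & r & sg & gb & hb & Hr & Hz & Hr' & [Hhb [Hsg [Hc Hs]]] & Hh & Hg).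
  exists (S z), r, sg, gb, hb. unfold zeros_credit.
  rewrite runs_double, Hr, slack_double, D_diff_double, D_excess_double by exact Ht.
  pose proof (gain0_D_nonneg t).
  assert (Hmin : Rmin (gb / 4 + hb + 1) 1 <= 1) by apply Rmin_r.
  repeat split; auto; lra.
Qed.

Lemma single_zero_succ_double (t : nat) :
  (1 <= t)%nat -> single_zero t -> ones_after_single_zero (2 * t + 1).
Proof.
  intros Ht (r & sg & gb & hb & Hr & Hr' & [Hhb [Hsg [Hc Hs]]] & Hg & Hh).
  exists 1%nat, r, (sg + gain0 gb hb), (D_diff t), (D_excess t).
  rewrite (slack_succ_double_zeros t 1 r), D_diff_succ_double, D_excess_succ_double by assumption.
  rewrite runs_succ_double, Hr by exact Ht. cbn [pow Nat.leb Nat.b2n INR].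
  repeat split; lia || lra.
Qed.

Lemma long_zeros_succ_double (t : nat) :
  (1 <= t)%nat -> long_zeros t -> ones_after_long_zeros (2 * t + 1).
Proof.
  intros Ht (z & r & sg & gb & hb & Hr & Hz & Hr' & [Hhb [Hsg [Hc Hs]]] & Hh & Hg).
  exists 1%nat, z, r.
  rewrite runs_succ_double, Hr by exact Ht. split; [reflexivity|split; [exact Hz|]].
  rewrite (slack_succ_double_zeros t z r), (proj2 (Nat.leb_le 2 z) Hz) by assumption.
  pose proof (gain0_gain1_ge1 gb hb (D_diff t) (D_excess t) Hhb Hh Hg).
  cbn [Nat.b2n INR]. lra.
Qed.

Lemma ones_after_single_zero_double (t : nat) :
  (1 <= t)%nat -> ones_after_single_zero t -> single_zero (2 * t).
Proof.
  intros Ht (l & r & tau & g0 & h0 & Hr & Hl & Htau & Hh0 & Hg & Hh & Hs).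
  exists ((true, l) :: (false, 1%nat) :: r), (tau - weight l + gain1 g0 h0),
    (D_diff t), (D_excess t).
  unfold zeros_credit.
  rewrite runs_double, Hr, slack_double, D_diff_double, D_excess_double by exact Ht.
  pose proof (weight_bounds l). pose proof (gain1_nonneg g0 h0 ltac:(lra)).
  pose proof (weight_ones_block l g0 h0 Hl Hh0). rewrite <- Hg, <- Hh in *.
  pose proof (D_excess_bounds t). pose proof (gain0_D_nonneg t).
  repeat split; try discriminate; lra.
Qed.

Lemma ones_after_single_zero_succ_double (t : nat) :
  (1 <= t)%nat -> ones_after_single_zero t -> ones_after_single_zero (2 * t + 1).
Proof.
  intros Ht (l & r & tau & g0 & h0 & Hr & Hl & Htau & Hh0 & Hg & Hh & Hs).
  exists (S l), r, tau, g0, h0.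
  pose proof (weight_succ_le l). pose proof (gain1_D_nonneg t).
  rewrite (slack_succ_double_ones t l ((false, 1%nat) :: r)), D_diff_succ_double,
    D_excess_succ_double by assumption.
  rewrite runs_succ_double, Hr by exact Ht.
  rewrite Hg, Hh in *. pose proof (pow_lt 2 l ltac:(lra)).
  rewrite S_INR. cbn [pow].
  repeat split; try lia; try lra; field; lra.
Qed.

Lemma ones_after_long_zeros_double (t : nat) :
  (1 <= t)%nat -> ones_after_long_zeros t -> single_zero (2 * t).
Proof.
  intros Ht (l & z & r & Hr & Hz & Hs).
  exists ((true, l) :: (false, z) :: r), (w - weight l), (D_diff t), (D_excess t).
  unfold zeros_credit.
  rewrite runs_double, Hr, slack_double, D_diff_double, D_excess_double by exact Ht.
  pose proof (weight_bounds l). pose proof (D_excess_bounds t). pose proof (gain0_D_nonneg t).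
  repeat split; try discriminate; lra.
Qed.

Lemma ones_after_long_zeros_succ_double (t : nat) :
  (1 <= t)%nat -> ones_after_long_zeros t -> ones_after_long_zeros (2 * t + 1).
Proof.
  intros Ht (l & z & r & Hr & Hz & Hs).
  exists (S l), z, r. rewrite (slack_succ_double_ones t l ((false, z) :: r)) by assumption.
  rewrite runs_succ_double, Hr by exact Ht.
  pose proof (weight_succ_le l). pose proof (gain1_D_nonneg t).
  repeat split; lia || lra.
Qed.

Lemma reachable_one : reachable 1.
Proof.
  left. exists 1%nat. split; [reflexivity|].
  unfold slack. rewrite mD_one. change (runs 1) with [(true, 1%nat)].
  rewrite short_ones_cons_weight. pose proof (weight_bounds 1). cbn. lra.
Qed.

Lemma reachable_double (t : nat) : (1 <= t)%nat -> reachable t -> reachable (2 * t).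
Proof.
  intros Ht [H|[H|[H|[H|H]]]].
  - right; left. now apply ones_only_double.
  - right; right; left. now apply single_zero_double.
  - right; right; left. now apply long_zeros_double.
  - right; left. now apply ones_after_single_zero_double.
  - right; left. now apply ones_after_long_zeros_double.
Qed.

Lemma reachable_succ_double (t : nat) : (1 <= t)%nat -> reachable t -> reachable (2 * t + 1).
Proof.
  intros Ht [H|[H|[H|[H|H]]]].
  - left. now apply ones_only_succ_double.
  - right; right; right; left. now apply single_zero_succ_double.
  - right; right; right; right. now apply long_zeros_succ_double.
  - right; right; right; left. now apply ones_after_single_zero_succ_double.
  - right; right; right; right. now apply ones_after_long_zeros_succ_double.
Qed.

Lemma reachable_all (t : nat) : (1 <= t)%nat -> reachable t.
Proof.
  induction t as [| | u Hu IH | u Hu IH _] using binary_ind; intros Ht.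
  - lia.
  - exact reachable_one.
  - apply reachable_double; auto.
  - apply reachable_succ_double; auto.
Qed.

Lemma slack_lower_bound (t : nat) : (1 <= t)%nat -> - 2 * w <= slack t.
Proof.
  intros Ht.
  destruct (reachable_all t Ht) as
    [(l & _ & Hs)
    |[(r & sg & gb & hb & _ & _ & [Hhb [Hsg [Hc Hs]]] & _)
    |[(z & r & sg & gb & hb & _ & _ & _ & [Hhb [Hsg [Hc Hs]]] & _)
    |[(l & r & tau & g0 & h0 & _ & _ & Htau & Hh0 & _ & _ & Hs)|(l & z & r & _ & _ & Hs)]]]].
  - lra.
  - lra.
  - lra.
  - pose proof (weight_bounds l). pose proof (gain1_nonneg g0 h0 ltac:(lra)). lra.
  - pose proof (weight_bounds l). lra.
Qed.

End Potential.

Lemma ratio_pow2_antitone (l k : nat) : (1 <= l <= k)%nat -> INR k / 2 ^ k <= INR l / 2 ^ l.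
Proof.
  intros [Hl Hlk]. induction Hlk as [|k Hlk IH]; [lra|].
  eapply Rle_trans; [|exact IH].
  pose proof (pow_lt 2 k ltac:(lra)). assert (1 <= INR k) by (apply (le_INR 1); lia).
  rewrite S_INR. cbn [pow].
  apply Rmult_le_reg_r with (2 * 2 ^ k); [lra|].
  unfold Rdiv. field_simplify; lra.
Qed.

Lemma mD_lower_bound (k : nat) (w : R) (t : nat) :
  0 <= w -> (forall l, (1 <= l <= k)%nat -> w <= INR l / 2 ^ l) -> (1 <= t)%nat ->
  4 + INR (innerZeroBlocks2 t)
  + w * (INR (oneBlocksLe k t) - 2 * INR (innerZeroBlocks2 t) - 2) <= mD t.
Proof.
  intros Hw Hwl Ht. pose proof (slack_lower_bound k w Hw Hwl t Ht) as H.
  unfold slack in H. change (inner_long_zeros (runs t)) with (innerZeroBlocks2 t) in H.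
  change (short_ones k (runs t)) with (oneBlocksLe k t) in H. lra.
Qed.

Lemma innerZeroBlocks2_le_mD (t : nat) : (1 <= t)%nat -> 4 + INR (innerZeroBlocks2 t) <= mD t.
Proof.
  intros Ht. pose proof (mD_lower_bound 0 0 t ltac:(lra) ltac:(lia) Ht). lra.
Qed.

Lemma mD_lower_bound_max (k t : nat) : (1 <= t)%nat ->
  4 + INR (innerZeroBlocks2 t)
  + Rmax 0 (INR (oneBlocksLe k t) - 2 * INR (innerZeroBlocks2 t) - 2) * (INR k / 2 ^ k) <= mD t.
Proof.
  intros Ht.
  assert (Hc : 0 <= INR k / 2 ^ k)
    by (apply Rdiv_le_0_compat; [apply pos_INR|apply pow_lt; lra]).
  pose proof (mD_lower_bound k (INR k / 2 ^ k) t Hc (fun l Hl => ratio_pow2_antitone l k Hl) Ht).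
  pose proof (innerZeroBlocks2_le_mD t Ht).
  unfold Rmax. destruct (Rle_dec 0 _); lra.
Qed.

Lemma IZR_max_half_le (a : Z) : IZR (Z.max 0 ((a - 1) / 2)) <= Rmax 0 (IZR a - 2).
Proof.
  destruct (Z.max_spec 0 ((a - 1) / 2)) as [[Hlt ->]|[Hle ->]].
  - apply Rle_trans with (IZR a - 2); [|apply Rmax_r].
    rewrite <- minus_IZR. apply IZR_le.
    pose proof (Z.mul_div_le (a - 1) 2 ltac:(lia)). lia.
  - apply Rmax_l.
Qed.

Lemma oneBlocksLe_le_mD (k t : nat) : (1 <= k)%nat -> (1 <= t)%nat ->
  INR (oneBlocksLe k t) <= 2 * INR (innerZeroBlocks2 t) + 2 + mD t * 2 ^ k.
Proof.
  intros Hk Ht. pose proof (mD_lower_bound_max k t Ht) as H.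
  pose proof (innerZeroBlocks2_le_mD t Ht). pose proof (pos_INR (innerZeroBlocks2 t)).
  set (x := INR (oneBlocksLe k t) - 2 * INR (innerZeroBlocks2 t) - 2) in H.
  pose proof (pow_lt 2 k ltac:(lra)) as Hp.
  assert (Hkc : 1 <= INR k) by (apply (le_INR 1); exact Hk).
  assert (0 <= mD t * 2 ^ k) by (apply Rmult_le_pos; lra).
  destruct (Rle_dec x 0) as [Hx|Hx]; [unfold x in Hx; lra|].
  rewrite Rmax_right in H by lra.
  assert (Hxk : x <= x * INR k) by nra.
  assert (x * INR k <= mD t * 2 ^ k); [|unfold x in *; lra].
  apply Rmult_le_reg_r with (/ 2 ^ k); [now apply Rinv_0_lt_compat|].
  rewrite (Rmult_assoc (mD t)), Rinv_r, Rmult_1_r by lra. unfold Rdiv in H. lra.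
Qed.

Theorem corollary2p13 :
  (forall (k t : nat), (2 <= k)%nat -> (1 <= t)%nat ->
     let K := innerZeroBlocks2 t in
     let L := oneBlocksLe k t in
     mD t >= 4 + INR K
             + IZR (Z.max 0 ((Z.of_nat L - 2 * Z.of_nat K - 1) / 2)%Z)
               * (INR k / 2 ^ k))
  /\
  (forall (D0 k : nat), (2 <= D0)%nat -> (2 <= k)%nat ->
     exists B : nat, forall t : nat, (1 <= t)%nat -> D t <= INR D0 ->
       (innerZeroBlocks2 t <= B)%nat /\ (oneBlocksLe k t <= B)%nat).
Proof.
  split.
  - intros k t Hk Ht K L. apply Rle_ge.
    eapply Rle_trans; [|apply (mD_lower_bound_max k t Ht)]. fold K L.
    apply Rplus_le_compat_l, Rmult_le_compat_r.
    + apply Rdiv_le_0_compat; [apply pos_INR|apply pow_lt; lra].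
    + replace (INR L - 2 * INR K - 2) with (IZR (Z.of_nat L - 2 * Z.of_nat K) - 2)
        by (rewrite minus_IZR, mult_IZR, <- !INR_IZR_INZ; ring).
      apply IZR_max_half_le.
  - intros D0 k HD0 Hk. exists (D0 * 2 ^ k + 2 * D0 + 2)%nat. intros t Ht HD.
    assert (HmD : mD t <= INR D0) by (eapply Rle_trans; [apply Rmin_l|exact HD]).
    pose proof (innerZeroBlocks2_le_mD t Ht). pose proof (oneBlocksLe_le_mD k t ltac:(lia) Ht).
    pose proof (pow_lt 2 k ltac:(lra)).
    assert (HK : (innerZeroBlocks2 t <= D0)%nat) by (apply INR_le; lra).
    split; [lia|]. apply INR_le. rewrite !plus_INR, !mult_INR, pow_INR.
    apply le_INR in HK. change (INR 2) with 2. nra.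
Qed.
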